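(* Let $\underline{X}$ be an observation from a distribution $P_{(\theta,\underline{\eta})}$ indexed by $(\theta,\underline{\eta})$ in a parameter space $H$, with $\theta$ a real parameter of interest, and fix $\alpha\in[0,1]$. For a confidence interval $C(\underline{X})=[L(\underline{X}),U(\underline{X})]$ for $\theta$, define its modification $C^M$ by $$T(\underline{x},\theta_0)=\min\{\theta_0-L(\underline{x}),\,U(\underline{x})-\theta_0\},\quad h(\underline{x},\theta_0)=\sup_{(\theta,\underline{\eta})\in H,\ \theta=\theta_0}P_{(\theta,\underline{\eta})}\big(T(\underline{X},\theta_0)\le T(\underline{x},\theta_0)\big),$$ $$C^M(\underline{x})=\overline{\{\theta_0: h(\underline{x},\theta_0)>\alpha\}}.$$ Let $C_0(\underline{X})$ be a $1-\alpha$ exact confidence interval for $\theta$, set $C_0^{M0}=C_0$ and $C_0^{M(k+1)}=(C_0^{Mk})^M$ for $k\ge0$, and let $C_0^{M\infty}(\underline{x})=\bigcap_{k=0}^{\infty}C_0^{Mk}(\underline{x})$. Then: (i) $C_0^{Mk}(\underline{x})$, as a set of $\theta$, is nonincreasing in $k\ge0$; (ii) $C_0^{M\infty}(\underline{X})$, which is contained in $C_0^{Mk}(\underline{X})$ for every $k$, is a $1-\alpha$ exact confidence interval; (iii) if $C_0^{Mk}(\underline{X})=C_0^{M(k+1)}(\underline{X})$ for some $k\ge0$, then $C_0^{M\infty}(\underline{X})=C_0^{Mk}(\underline{X})$.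
   Context: For a set $A$ of parameter values in $\mathbb{R}$, $\overline{A}$ denotes the smallest closed simply connected set (closed interval) containing $A$. An interval $C(\underline{X})$ for $\theta$ is ''$1-\alpha$ exact'' if $\inf_{(\theta,\underline{\eta})\in H}P_{(\theta,\underline{\eta})}(\theta\in C(\underline{X}))\ge1-\alpha$. *)

From HB Require Import structures.
From mathcomp Require Import all_boot all_order all_algebra.
From mathcomp Require Import all_classical all_reals all_analysis.
Set Implicit Arguments. Unset Strict Implicit. Unset Printing Implicit Defensive.
Import Order.TTheory GRing.Theory Num.Theory.
Import numFieldNormedType.Exports.
Local Open Scope classical_set_scope.
Local Open Scope ring_scope.
Local Open Scope ereal_scope.

Section ModifiedCI.
Context {R : realType}.

(* \overline{A}: the smallest closed simply connected (= closed connected)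
   subset of R containing A, i.e. the intersection of all of them. *)
Definition cl_hull (A : set R) : set R :=
  \bigcap_(B in [set B : set R | [/\ closed B, connected B & A `<=` B]]) B.

Definition Lend (C : set R) : \bar R := ereal_inf (EFin @` C).
Definition Uend (C : set R) : \bar R := ereal_sup (EFin @` C).

Definition Tstat (C : set R) (t0 : R) : \bar R :=
  mine (t0%:E - Lend C) (Uend C - t0%:E).

Context {d : measure_display} {Omega : measurableType d} {E : Type}.
Variables (H : set (R * E)) (P : R * E -> probability Omega R) (alpha : R).

Definition hfun (C : Omega -> set R) (x : Omega) (t0 : R) : \bar R :=
  ereal_sup [set P p [set y | Tstat (C y) t0 <= Tstat (C x) t0]
            | p in [set p | H p /\ p.1 = t0]].

Definition modif (C : Omega -> set R) : Omega -> set R :=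
  fun x => cl_hull [set t0 | alpha%:E < hfun C x t0].

Fixpoint Miter (k : nat) (C : Omega -> set R) : Omega -> set R :=
  match k with
  | O => C
  | S k' => modif (Miter k' C)
  end.

Definition Minf (C : Omega -> set R) : Omega -> set R :=
  fun x => \bigcap_(k in [set: nat]) Miter k C x.

Definition exact_ci (C : Omega -> set R) : Prop :=
  ((1 - alpha)%R)%:E <= ereal_inf [set P p [set x | C x p.1] | p in H].

End ModifiedCI.

(** A closed interval C contains t exactly when T(C, t) >= 0.  Hence, if C is
  exact and t lies outside C(x), the event T(C(X), t) <= T(C(x), t) forces
  t outside C(X), so h(x, t) <= alpha and C^M(x) is contained in C(x).  The
  modification is again exact because p-values are super-uniform: for every
  statistic f the event P(f(Y) <= f(X)) <= alpha has probability at most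
  alpha.  The iterates thus form a nonincreasing sequence of exact intervals;
  the complements of the events "t in C^Mk(X)" increase, so continuity of the
  measure makes their intersection exact, and a fixed point of the iteration
  is its limit. *)

From HB Require Import structures.
From mathcomp Require Import all_boot all_order all_algebra.
From mathcomp Require Import all_classical all_reals all_analysis.
From mathcomp Require Import lra.

Set Implicit Arguments.
Unset Strict Implicit.
Unset Printing Implicit Defensive.
Import Order.TTheory GRing.Theory Num.Theory.
Import numFieldNormedType.Exports.
Local Open Scope classical_set_scope.
Local Open Scope ring_scope.
Local Open Scope ereal_scope.

Section closed_intervals.
Variable R : realType.
Implicit Types (A C : set R) (t : R).

Lemma closed_ubound_mem C t : closed C -> ubound C t -> t%:E <= Uend C -> C t.
Proof.
move=> cC ubt tU; have C0 : C !=set0.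
  apply/set0P/negP => /eqP C0; move: tU.
  by rewrite C0 /Uend image_set0 ereal_sup0 leeNy_eq.
apply: (itv_closed_supremums C0 cC); split=> // b ubb.
rewrite -lee_fin; apply: le_trans tU _.
by apply: ge_ereal_sup => _ [c Cc <-]; rewrite lee_fin; exact: ubb.
Qed.

Lemma closed_lbound_mem C t : closed C -> lbound C t -> Lend C <= t%:E -> C t.
Proof.
move=> cC lbt Lt; have C0 : C !=set0.
  apply/set0P/negP => /eqP C0; move: Lt.
  by rewrite C0 /Lend image_set0 ereal_inf0 leye_eq.
apply: (itv_closed_infimums C0 cC); split=> // b lbb.
rewrite -lee_fin; apply: le_trans Lt.
by apply: le_ereal_inf_tmp => _ [c Cc <-]; rewrite lee_fin; exact: lbb.
Qed.

Lemma mem_closed_interval C t : closed C -> is_interval C ->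
  Lend C <= t%:E <= Uend C -> C t.
Proof.
move=> cC iC /andP[Lt tU].
have [[a Ca lt_at]|noa] := pselect (exists2 a, C a & (a < t)%R); last first.
  apply: closed_lbound_mem Lt => // c Cc; rewrite leNgt; apply/negP => ct.
  exact: noa (ex_intro2 _ _ c Cc ct).
have [[b Cb tb]|nob] := pselect (exists2 b, C b & (t < b)%R); last first.
  apply: closed_ubound_mem tU => // c Cc; rewrite leNgt; apply/negP => tc.
  exact: nob (ex_intro2 _ _ c Cc tc).
by apply: (iC a b) => //; rewrite !ltW.
Qed.

Lemma Tstat_ge0P C t : closed C -> is_interval C -> C t <-> 0 <= Tstat C t.
Proof.
move=> cC iC; rewrite /Tstat le_min !sube_ge0 ?orbT //; split.
  by move=> Ct; rewrite ereal_inf_lbound ?ereal_sup_ubound //; exists t.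
exact: mem_closed_interval.
Qed.

Lemma sub_cl_hull A : A `<=` cl_hull A.
Proof. by move=> x Ax B [_ _ AB]; exact: AB. Qed.

Lemma cl_hull_sub A C : closed C -> is_interval C -> A `<=` C -> cl_hull A `<=` C.
Proof. by move=> cC iC AC x; apply; split=> //; exact/connected_intervalP. Qed.

Lemma closed_cl_hull A : closed (cl_hull A).
Proof. by apply: closed_bigI => B []. Qed.

Lemma is_interval_cl_hull A : is_interval (cl_hull A).
Proof.
move=> a b ha hb z azb B [cB cnB AB]; have /connected_intervalP iB := cnB.
by apply: (iB a b) => //; [apply: ha | apply: hb].
Qed.

End closed_intervals.

Section extended_real_sublevels.
Variable R : realType.
Implicit Types (s t : \bar R) (S : set (\bar R)).

Lemma ereal_downsetE S : (forall s t, t <= s -> S s -> S t) ->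
  S = [set t | t <= ereal_sup S] \/ S = [set t | t < ereal_sup S].
Proof.
move=> downS; have [Ssup|nSsup] := pselect (S (ereal_sup S)); [left|right].
  apply/seteqP; split=> t /=; first exact: ereal_sup_ubound.
  by move=> tsup; exact: downS tsup Ssup.
apply/seteqP; split=> t /=.
  move=> St; rewrite lt_neqAle ereal_sup_ubound // andbT.
  by apply/eqP => tE; apply: nSsup; rewrite -tE.
by case/ereal_sup_gt => u Su tu; exact: downS (ltW tu) Su.
Qed.

Lemma ereal_lt_nondecreasing_seq s : s != -oo -> exists u : nat -> \bar R,
  [/\ nondecreasing_seq u, forall n, u n < s & forall t, t < s -> exists n, t <= u n].
Proof.
case: s => [r| |] // _.
- exists (fun n => (r - n.+1%:R^-1)%:E); split.
  + move=> n m nm; rewrite lee_fin lerB // lef_pV2 ?posrE ?ler_nat //.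
  + by move=> n; rewrite lte_fin ltrBlDr ltrDl invr_gt0.
  + case=> [q| |] // => [|_]; last by exists 0%N; rewrite leNye.
    rewrite lte_fin => /ltr_add_invr[n qr]; exists n.
    by rewrite lee_fin lerBrDr ltW.
- exists (fun n => n%:R%:E); split.
  + by move=> n m nm; rewrite lee_fin ler_nat.
  + by move=> n; rewrite ltey.
  + case=> [q| |] // _; last by exists 0%N; rewrite leNye.
    by exists (Num.truncn q).+1; rewrite lee_fin ltW // truncnS_gt.
Qed.

Lemma lt_sublevel_bigcup (T : Type) (f : T -> \bar R) s (u : nat -> \bar R) :
  (forall n, u n < s) -> (forall t, t < s -> exists n, t <= u n) ->
  [set y | f y < s] = \bigcup_n [set y | f y <= u n].
Proof.
move=> us ue; apply/seteqP; split=> y /=; first by case/ue => n; exists n.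
by case=> n _ /= fyu; exact: le_lt_trans fyu (us n).
Qed.

Lemma measurable_lt_sublevel d (T : measurableType d) (f : T -> \bar R) s :
  (forall t, measurable [set y | f y <= t]) -> measurable [set y | f y < s].
Proof.
move=> mf; have [->|sNy] := eqVneq s -oo.
  by rewrite (_ : [set y | _] = set0) // -subset0 => y /=; rewrite ltNge leNye.
have [u [_ us ue]] := ereal_lt_nondecreasing_seq sNy.
by rewrite (lt_sublevel_bigcup f us ue); apply: bigcup_measurable => n _.
Qed.

End extended_real_sublevels.

Section probability_bounds.
Variables (R : realType) (d : measure_display) (T : measurableType d).

Lemma nondecreasing_bigcup_measure_le (mu : {measure set T -> \bar R})
    (F : nat -> set T) (a : \bar R) :
  (forall n, measurable (F n)) -> nondecreasing_seq F ->
  (forall n, mu (F n) <= a) -> mu (\bigcup_n F n) <= a.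
Proof.
move=> mF ndF Fa; have mU : measurable (\bigcup_n F n).
  by apply: bigcup_measurable => n _.
have muF := nondecreasing_cvg_mu (mu := mu) mF mU ndF.
rewrite -(cvg_lim _ muF) //; apply: lime_le; first exact: cvgP muF.
by near=> n; exact: Fa.
Unshelve. all: by end_near.
Qed.

Variable mu : probability T R.

Lemma probability_setC_leP (A : set T) (a : R) : measurable A ->
  (1 - a)%R%:E <= mu A <-> mu (~` A) <= a%:E.
Proof.
move=> mA; rewrite probability_setC //.
move: (measure_ge0 mu A) (probability_le1 mu mA); case: (mu A) => [r| |] //= *.
by rewrite -EFinB !lee_fin; split => ?; lra.
Qed.

(* The set below is [p(X) <= a] for the p-value [p(x) = mu (f <= f x)]. *)
Lemma superuniform_pvalue (f : T -> \bar R) (a : R) : (0 <= a)%R ->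
  (forall t, measurable [set y | f y <= t]) ->
  let A := [set x | mu [set y | f y <= f x] <= a%:E] in
  measurable A /\ mu A <= a%:E.
Proof.
move=> a0 mf A; pose S := [set t | mu [set y | f y <= t] <= a%:E].
have downS s t : t <= s -> S s -> S t.
  move=> ts; apply: le_trans; rewrite le_measure ?inE //.
  by move=> y /= fyt; exact: le_trans fyt ts.
rewrite (_ : A = f @^-1` S) //.
have [SE|SE] := ereal_downsetE downS; set s := ereal_sup S in SE.
  have Ss : S s by rewrite SE /=.
  by rewrite SE; split; [exact: mf | exact: Ss].
rewrite SE; split; first exact: measurable_lt_sublevel.
have [sNy|sNy] := eqVneq s -oo.
  rewrite (_ : _ @^-1` _ = set0) ?measure0 ?lee_fin //.
  by rewrite -subset0 => y /=; rewrite sNy ltNge leNye.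
have [u [ndu us ue]] := ereal_lt_nondecreasing_seq sNy.
change (mu [set y | f y < s] <= a%:E); rewrite (lt_sublevel_bigcup f us ue).
apply: nondecreasing_bigcup_measure_le => [//|n m nm|n].
  by apply/subsetPset => y /= fyu; exact: le_trans fyu (ndu _ _ nm).
by have : S (u n) by rewrite SE; exact: us.
Qed.

End probability_bounds.

Lemma subset_nonincreasing (T : Type) (F : nat -> set T) :
  (forall k, F k.+1 `<=` F k) -> forall m n, (m <= n)%N -> F n `<=` F m.
Proof.
move=> FS m n; apply: (homo_leq (r := fun A B => B `<=` A)) => // [A|B A C BA CB].
  exact: subset_refl.
exact: subset_trans CB BA.
Qed.

Section modification.
Variables (R : realType) (d : measure_display) (Omega : measurableType d).
Variables (E : Type) (H : set (R * E)) (P : R * E -> probability Omega R).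
Variable alpha : R.
Implicit Types (C : Omega -> set R) (x : Omega) (t : R).

Local Notation modif := (modif H P alpha).
Local Notation exact_ci := (exact_ci H P alpha).

Definition interval_valued C := forall x, closed (C x) /\ is_interval (C x).

Definition Tstat_measurable C :=
  forall t0 (t : \bar R), measurable [set y | Tstat (C y) t0 <= t].

Lemma measurable_covers C t : interval_valued C -> Tstat_measurable C ->
  measurable [set y | C y t].
Proof.
move=> ivC mC; rewrite (_ : [set y | C y t] = ~` [set y | Tstat (C y) t < 0]).
  exact/measurableC/measurable_lt_sublevel.
apply/seteqP; split=> y /=; have [cC iC] := ivC y.
  by move/(Tstat_ge0P t cC iC); rewrite leNgt => /negP.
by move/negP; rewrite -leNgt => /(Tstat_ge0P t cC iC).
Qed.

Lemma exact_ciP C : (forall p, H p -> measurable [set x | C x p.1]) ->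
  exact_ci C <-> forall p, H p -> P p (~` [set x | C x p.1]) <= alpha%:E.
Proof.
move=> mC; split.
  move=> ex p Hp; apply/probability_setC_leP; first exact: mC.
  by apply: le_trans ex _; apply: ereal_inf_lbound; exists p.
move=> PC; apply: le_ereal_inf_tmp => _ [p Hp <-].
by apply/probability_setC_leP; [exact: mC | exact: PC].
Qed.

Lemma modif_interval_valued C : interval_valued (modif C).
Proof. by move=> x; split; [exact: closed_cl_hull | exact: is_interval_cl_hull]. Qed.

Lemma hfun_le_notin C x t : interval_valued C -> Tstat_measurable C ->
  exact_ci C -> ~ C x t -> hfun H P C x t <= alpha%:E.
Proof.
move=> ivC mC exC nCxt; apply: ge_ereal_sup => _ [p [Hp pt] <-]; subst t.
have Tx : Tstat (C x) p.1 < 0.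
  rewrite ltNge; apply/negP; apply: contra_not nCxt.
  exact: (Tstat_ge0P _ (ivC x).1 (ivC x).2).2.
apply: le_trans ((exact_ciP _).1 exC p Hp); last first.
  by move=> q _; exact: measurable_covers.
rewrite le_measure ?inE //; first exact/measurableC/measurable_covers.
move=> y /= Ty /(Tstat_ge0P _ (ivC y).1 (ivC y).2) T0.
by have := le_lt_trans T0 (le_lt_trans Ty Tx); rewrite ltxx.
Qed.

Lemma modif_sub C x : interval_valued C -> Tstat_measurable C -> exact_ci C ->
  modif C x `<=` C x.
Proof.
move=> ivC mC exC; apply: cl_hull_sub; [exact: (ivC x).1 | exact: (ivC x).2 |].
move=> t /=; apply: contraPP => nCxt; apply/negP; rewrite -leNgt.
exact: hfun_le_notin.
Qed.

Lemma exact_ci_modif C : (0 <= alpha)%R -> Tstat_measurable C ->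
  Tstat_measurable (modif C) -> exact_ci (modif C).
Proof.
move=> a0 mC mM; have mcov p : measurable [set x | modif C x p.1].
  exact: measurable_covers (modif_interval_valued C) mM.
apply/exact_ciP => // p Hp.
have [mA PA] := superuniform_pvalue (P p) a0 (mC p.1).
apply: le_trans PA; rewrite le_measure ?inE //; first exact: measurableC.
move=> x /= nMx; have : ~ alpha%:E < hfun H P C x p.1.
  by move=> h; apply: nMx; exact: sub_cl_hull.
move/negP; rewrite -leNgt; apply: le_trans.
by apply: ereal_sup_ubound; exists p.
Qed.

Lemma exact_ci_bigcap (F : nat -> Omega -> set R) :
  (forall k t, measurable [set x | F k x t]) ->
  (forall k x, F k.+1 x `<=` F k x) -> (forall k, exact_ci (F k)) ->
  exact_ci (fun x => \bigcap_k F k x).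
Proof.
move=> mF FS exF; apply/exact_ciP => [p _|p Hp].
  by apply: bigcap_measurable => [|k _]; [exists 0%N | exact: mF].
change (P p (~` \bigcap_k [set x | F k x p.1]) <= alpha%:E).
rewrite setC_bigcap; apply: nondecreasing_bigcup_measure_le.
- by move=> k; exact/measurableC/mF.
- move=> m n mn; apply/subsetPset => x /= nFm Fn; apply: nFm.
  exact: (subset_nonincreasing (FS^~ x) mn).
- by move=> k; apply: (exact_ciP _).1 => // q _; exact: mF.
Qed.

End modification.

Section iteration.
Variables (R : realType) (d : measure_display) (Omega : measurableType d).
Variables (E : Type) (H : set (R * E)) (P : R * E -> probability Omega R).
Variables (alpha : R) (C0 : Omega -> set R).

Local Notation M k := (Miter H P alpha k C0).
Local Notation Minf := (Minf H P alpha C0).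

Lemma Minf_sub k x : Minf x `<=` M k x.
Proof. by move=> t; apply. Qed.

Hypotheses (alpha_ge0 : (0 <= alpha)%R) (ivC0 : interval_valued C0).
Hypotheses (exC0 : exact_ci H P alpha C0) (mM : forall k, Tstat_measurable (M k)).

Lemma Miter_interval_valued k : interval_valued (M k).
Proof. by case: k => [|k] //; apply: modif_interval_valued. Qed.

Lemma exact_ci_Miter k : exact_ci H P alpha (M k).
Proof. by case: k => [|k] //; apply: exact_ci_modif => //; exact: (mM k.+1). Qed.

Lemma MiterS_sub k x : M k.+1 x `<=` M k x.
Proof.
by apply: modif_sub; [exact: Miter_interval_valued | exact: mM | exact: exact_ci_Miter].
Qed.

Lemma Minf_closed_interval x : closed (Minf x) /\ is_interval (Minf x).
Proof.
split; first by apply: closed_bigI => k _; exact: (Miter_interval_valued k x).1.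
move=> a b ha hb z azb k _.
by apply: ((Miter_interval_valued k x).2 a b) => //; [exact: ha | exact: hb].
Qed.

Lemma exact_ci_Minf : exact_ci H P alpha Minf.
Proof.
apply: exact_ci_bigcap; [|exact: MiterS_sub|exact: exact_ci_Miter].
by move=> k t; exact/measurable_covers/mM/Miter_interval_valued.
Qed.

Lemma Minf_stationary k : M k = M k.+1 -> Minf = M k.
Proof.
move=> Mk; have Mstat j : M (k + j) = M k.
  by elim: j => [|j IH]; rewrite ?addn0 // addnS /= IH.
apply/funext => x; apply/seteqP; split=> [|t Mkt j _]; first exact: Minf_sub.
have [kj|jk] := leqP k j; first by rewrite -(subnKC kj) Mstat.
exact: (subset_nonincreasing (MiterS_sub^~ x) (ltnW jk)).
Qed.

End iteration.

Theorem theorem3 (R : realType) (d : measure_display) (Omega : measurableType d)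
    (E : Type) (H : set (R * E)) (P : R * E -> probability Omega R) (alpha : R)
    (L0 U0 : Omega -> R) :
  (0 <= alpha <= 1)%R ->
  (forall x, (L0 x <= U0 x)%R) ->
  let C0 := fun x => `[L0 x, U0 x]%classic in
  exact_ci H P alpha C0 ->
  (* regularity: all events of the form {T_k(X,theta0) <= t} are measurable *)
  (forall (k : nat) (t0 : R) (t : \bar R),
      measurable [set y | Tstat (Miter H P alpha k C0 y) t0 <= t]) ->
  (* (i) *)
  (forall (k : nat) (x : Omega),
      Miter H P alpha k.+1 C0 x `<=` Miter H P alpha k C0 x) /\
  (* (ii) *)
  ((forall (k : nat) (x : Omega), Minf H P alpha C0 x `<=` Miter H P alpha k C0 x) /\
   (forall x : Omega, closed (Minf H P alpha C0 x) /\ connected (Minf H P alpha C0 x)) /\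
   exact_ci H P alpha (Minf H P alpha C0)) /\
  (* (iii) *)
  (forall k : nat,
      Miter H P alpha k C0 = Miter H P alpha k.+1 C0 ->
      Minf H P alpha C0 = Miter H P alpha k C0).
Proof.
move=> /andP[a0 _] _ C0 exC0 mM.
have ivC0 : interval_valued C0.
  by move=> x; split; [exact: interval_closed | exact: interval_is_interval].
split; first exact: MiterS_sub.
split; last exact: Minf_stationary.
split; first exact: Minf_sub.
split; last exact: exact_ci_Minf.
move=> x; have [cM iM] := Minf_closed_interval H P alpha ivC0 x.
by split; last exact/connected_intervalP.
Qed.
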